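(* Let $\Sigma$ be an alphabet and $n\geq 1$. If $g\colon\mathcal{T}(\Sigma)^n\to\mathcal{T}(\Sigma)$ is WCP, then for all $\vec u,\vec v\in\Sigma^n$, the trees $g(\vec u)$ and $g(\vec v)$ are similar.
   Context: Let $\Sigma$ be an alphabet not containing $0,1$. A binary tree over $\Sigma$ is a finite set $t \subseteq \{0,1\}^*\Sigma$ such that for any $ua, vb \in t$ with $ua \neq vb$, $u$ is not a prefix of $v$ and $v$ is not a prefix of $u$; $\mathcal{T}(\Sigma)$ is the set of such trees, $\mathbf 0=\emptyset$, each letter $a$ is identified with $\{a\}$, and $t\star t' = 0.t\cup 1.t'$. Every map $h\colon\Sigma\to\mathcal{T}(\Sigma)$ (in particular every map $\Sigma\to\Sigma$) extends uniquely to an endomorphism of $\langle\mathcal{T}(\Sigma),\star\rangle$, still denoted $h$. A function $g\colon\mathcal{T}(\Sigma)^n\to\mathcal{T}(\Sigma)$ is WCP if for every idempotent mapping $h\colon\Sigma\to\Sigma$ and all $\vec u,\vec v\in\Sigma^n$, $h(\vec u)=h(\vec v)$ implies $h(g(\vec u))=h(g(\vec v))$, where $h(\langle u_1,\ldots,u_n\rangle)=\langle h(u_1),\ldots,h(u_n)\rangle$. For $a\in\Sigma$, $\nu_a$ is the endomorphism sending every letter to $a$; trees $t,t'$ are similar if $\nu_a(t)=\nu_a(t')$ for some (equivalently every) $a\in\Sigma$. *)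

From mathcomp Require Import all_boot.
From mathcomp Require Import finmap.
Set Implicit Arguments. Unset Strict Implicit. Unset Printing Implicit Defensive.
Local Open Scope fset_scope.

(* A word of {0,1}^* Sigma is represented as a pair (path, letter), with
   path : seq bool (false = 0, true = 1). *)
Definition word (Sigma : finType) := (seq bool * Sigma)%type.

Definition is_tree (Sigma : finType) (t : {fset word Sigma}) : Prop :=
  forall x y : word Sigma, x \in t -> y \in t -> x != y ->
    ~~ prefix x.1 y.1 /\ ~~ prefix y.1 x.1.

Definition tree (Sigma : finType) := {t : {fset word Sigma} | is_tree t}.

Lemma is_tree_letter (Sigma : finType) (a : Sigma) : is_tree [fset ([::], a)].
Proof.
move=> x y; rewrite !inE => /eqP -> /eqP ->; by rewrite eqxx.
Qed.

Definition letter (Sigma : finType) (a : Sigma) : tree Sigma :=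
  exist _ [fset ([::], a)] (@is_tree_letter Sigma a).

(* the (unique) endomorphism of <T(Sigma), *> extending h : Sigma -> Sigma,
   written out on the underlying sets: it renames every leaf label. *)
Definition tmap (Sigma : finType) (h : Sigma -> Sigma) (t : {fset word Sigma})
  : {fset word Sigma} := [fset (p.1, h p.2) | p in t].

Definition idempotent_map (Sigma : finType) (h : Sigma -> Sigma) : Prop :=
  forall x, h (h x) = h x.

Definition WCP (Sigma : finType) (n : nat)
  (g : n.-tuple (tree Sigma) -> tree Sigma) : Prop :=
  forall (h : Sigma -> Sigma), idempotent_map h ->
  forall u v : n.-tuple Sigma, map_tuple h u = map_tuple h v ->
    tmap h (proj1_sig (g (map_tuple (@letter Sigma) u)))
    = tmap h (proj1_sig (g (map_tuple (@letter Sigma) v))).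

Definition nu (Sigma : finType) (a : Sigma) : Sigma -> Sigma := fun _ => a.

Definition similar (Sigma : finType) (t t' : tree Sigma) : Prop :=
  exists a : Sigma, tmap (nu a) (proj1_sig t) = tmap (nu a) (proj1_sig t').

From mathcomp Require Import all_boot.
From mathcomp Require Import finmap.

Set Implicit Arguments. Unset Strict Implicit. Unset Printing Implicit Defensive.

Lemma nu_idempotent (Sigma : finType) (a : Sigma) : idempotent_map (nu a).
Proof. by []. Qed.

Lemma map_tuple_nu (Sigma : finType) (a : Sigma) (n : nat) (u v : n.-tuple Sigma) :
  map_tuple (nu a) u = map_tuple (nu a) v.
Proof. by apply: eq_from_tnth => i; rewrite !tnth_map. Qed.

Theorem mainTheorem6 (Sigma : finType) (n : nat) (hn : 1 <= n)
  (g : n.-tuple (tree Sigma) -> tree Sigma) :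
  WCP g ->
  forall u v : n.-tuple Sigma,
    similar (g (map_tuple (@letter Sigma) u)) (g (map_tuple (@letter Sigma) v)).
Proof.
move=> wcp_g u v.
pose a := tnth u (Ordinal hn).
exists a.
exact: wcp_g (nu a) (nu_idempotent a) u v (map_tuple_nu a u v).
Qed.
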